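(* Let $R$ be a Noetherian ring, $q\in R^\times$ a central unit, and $(\sigma,\delta)$ a $q$-skew derivation on $R$. Let $N$ be a $\sigma$-ideal of $R$, and suppose there is a positive integer $n$ such that $\delta^n(N^n)=0$ and $\{n!\}_q$ is invertible in $R$. Then $\delta(N)^n\subseteq N$. In particular, if $N$ is the prime radical of $R$, then $\delta(N)\subseteq N$.
   Context: A skew derivation is a pair $(\sigma,\delta)$ with $\sigma$ a ring automorphism and $\delta$ additive with $\delta(ab)=\delta(a)b+\sigma(a)\delta(b)$. It is a $q$-skew derivation if $\delta\sigma=q\sigma\delta$, $\sigma(q)=q$ and $\delta(q)=0$. A $\sigma$-ideal is a two-sided ideal $I$ with $\sigma(I)\subseteq I$. $\{n!\}_q:=(1)(1+q)(1+q+q^2)\cdots(1+q+\cdots+q^{n-1})\in R$. $\delta(N)^n$ denotes the set of all products $\delta(s_1)\cdots\delta(s_n)$ with $s_i\in N$ (and their sums). The prime radical of $R$ is the intersection of all prime ideals of $R$. *)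

From HB Require Import structures.
From mathcomp Require Import all_boot all_order all_algebra.
Set Implicit Arguments. Unset Strict Implicit. Unset Printing Implicit Defensive.
Import GRing.Theory.
Local Open Scope ring_scope.

Section Defs.
Variable R : unitRingType.

Definition subsetR (A B : R -> Prop) := forall x, A x -> B x.

Definition is_left_ideal (I : R -> Prop) :=
  [/\ I 0, (forall x y, I x -> I y -> I (x + y)) & (forall r x, I x -> I (r * x))].
Definition is_right_ideal (I : R -> Prop) :=
  [/\ I 0, (forall x y, I x -> I y -> I (x + y)) & (forall r x, I x -> I (x * r))].
Definition is_ideal (I : R -> Prop) := is_left_ideal I /\ is_right_ideal I.

Definition left_noetherian :=
  forall I : nat -> R -> Prop, (forall k, is_left_ideal (I k)) ->
    (forall k, subsetR (I k) (I k.+1)) ->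
    exists m, forall k, (m <= k)%N -> forall x, I k x <-> I m x.
Definition right_noetherian :=
  forall I : nat -> R -> Prop, (forall k, is_right_ideal (I k)) ->
    (forall k, subsetR (I k) (I k.+1)) ->
    exists m, forall k, (m <= k)%N -> forall x, I k x <-> I m x.
Definition noetherian := left_noetherian /\ right_noetherian.

Definition is_prime_ideal (P : R -> Prop) :=
  [/\ is_ideal P, ~ P 1 &
    forall A B : R -> Prop, is_ideal A -> is_ideal B ->
      (forall a b, A a -> B b -> P (a * b)) -> subsetR A P \/ subsetR B P].

Definition prime_radical (x : R) := forall P, is_prime_ideal P -> P x.

Definition setpow (S : R -> Prop) (n : nat) (x : R) :=
  exists m (f : 'I_m -> 'I_n -> R),
    (forall j i, S (f j i)) /\ x = \sum_(j < m) \prod_(i < n) f j i.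

Definition imageR (f : R -> R) (S : R -> Prop) (y : R) := exists s, S s /\ y = f s.

Definition is_ring_automorphism (s : R -> R) :=
  [/\ (forall x y, s (x + y) = s x + s y), (forall x y, s (x * y) = s x * s y),
      s 1 = 1 & bijective s].

Definition is_skew_derivation (s d : R -> R) :=
  [/\ is_ring_automorphism s, (forall x y, d (x + y) = d x + d y) &
      (forall a b, d (a * b) = d a * b + s a * d b)].

Definition is_q_skew_derivation (q : R) (s d : R -> R) :=
  [/\ is_skew_derivation s d, (forall x, d (s x) = q * s (d x)), s q = q & d q = 0].

Definition is_sigma_ideal (s : R -> R) (N : R -> Prop) :=
  is_ideal N /\ forall x, N x -> N (s x).

Definition qfact (q : R) (n : nat) : R := \prod_(i < n) \sum_(j < i.+1) q ^+ j.

Definition central (q : R) := forall x, q * x = x * q.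

End Defs.

From HB Require Import structures.
From mathcomp Require Import all_boot all_order all_algebra.
Import GRing.Theory.
Set Implicit Arguments.
Unset Strict Implicit.
Unset Printing Implicit Defensive.
Local Open Scope ring_scope.

(* By the q-Leibniz rule
     d^k(xy) = \sum_(j <= k) [k choose j]_q s^j(d^(k-j) x) d^j y
   and induction on m, for a_1, ..., a_m in N we get d^k(a_1 ... a_m) in N when k < m, and
     d^m(a_1 ... a_m) = {m!}_q s^(m-1)(d a_1) ... s(d a_(m-1)) d a_m   modulo N.
   For m = n the left side vanishes and {n!}_q is a unit, so the twisted product lies in N.
   As R is Noetherian, s maps N onto N, and d s^j = q^j s^j d turns any d(b_1) ... d(b_n)
   with b_i in N into a central multiple of a twisted product.  Finally d(N) + N is an ideal
   whose n-th power lies in N, hence in every prime ideal; so when N is the prime radical,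
   d(N) + N lies in every prime ideal, i.e. in N. *)

Section Ideals.
Variable R : unitRingType.

Lemma is_ideal_intro (I : R -> Prop) :
  I 0 -> (forall x y, I x -> I y -> I (x + y)) ->
  (forall r x, I x -> I (r * x)) -> (forall r x, I x -> I (x * r)) ->
  is_ideal I.
Proof. by move=> I0 ID IMl IMr; split; split. Qed.

Variable I : R -> Prop.
Hypothesis I_ideal : is_ideal I.

Lemma ideal0 : I 0. Proof. by case: I_ideal => [[]]. Qed.
Lemma idealD x y : I x -> I y -> I (x + y). Proof. by case: I_ideal => [[_ + _] _]; apply. Qed.
Lemma idealMl r x : I x -> I (r * x). Proof. by case: I_ideal => [[_ _ +] _]; apply. Qed.
Lemma idealMr r x : I x -> I (x * r). Proof. by case: I_ideal => [_ [_ _ +]]; apply. Qed.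

Lemma idealN x : I x -> I (- x).
Proof. by move=> Ix; rewrite -mulN1r; apply: idealMl. Qed.

Lemma idealB x y : I x -> I y -> I (x - y).
Proof. by move=> Ix Iy; apply/idealD/idealN. Qed.

Lemma ideal_sum (J : Type) (r : seq J) (P : pred J) (F : J -> R) :
  (forall j, P j -> I (F j)) -> I (\sum_(j <- r | P j) F j).
Proof. by apply: big_ind; [exact: ideal0 | exact: idealD]. Qed.

End Ideals.

Section IdealQuotient.
Variables (R : unitRingType) (I : R -> Prop).

Definition ideal_quotient (P : R -> Prop) (y : R) := forall a, I a -> P (a * y).

Lemma ideal_quotient_ideal P : is_ideal I -> is_ideal P -> is_ideal (ideal_quotient P).
Proof.
move=> I_ideal P_ideal; apply: is_ideal_intro => [a _|x y Px Py a Ia|r x Px a Ia|r x Px a Ia].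
- by rewrite mulr0; apply: ideal0.
- by rewrite mulrDr; apply: idealD => //; [apply: Px | apply: Py].
- by rewrite mulrA; apply: Px; apply: idealMr.
- by rewrite mulrA; apply: idealMr => //; apply: Px.
Qed.

End IdealQuotient.

Lemma prime_ideal_pow (R : unitRingType) (P I : R -> Prop) k :
  is_prime_ideal P -> is_ideal I ->
  (forall l, {in l, forall x, I x} -> size l = k.+1 -> P (\prod_(x <- l) x)) ->
  subsetR I P.
Proof.
move=> [P_ideal _ P_prime] I_ideal; elim: k => [|k IHk] Ipow.
  move=> x Ix; have := Ipow [:: x]; rewrite big_seq1; apply=> //.
  by move=> y; rewrite inE => /eqP->.
have [//|IquotP] := P_prime _ _ I_ideal (ideal_quotient_ideal I_ideal P_ideal)
  (fun a b Ia Qb => Qb a Ia).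
apply: IHk => l Il size_l; apply: IquotP => a Ia.
have := Ipow (a :: l); rewrite big_cons; apply; last by rewrite /= size_l.
exact/forall_cons.
Qed.

Lemma additive_zmod_morphism (R : unitRingType) (f : R -> R) :
  (forall x y, f (x + y) = f x + f y) -> zmod_morphism f.
Proof. by move=> fD x y; apply: (addIr (f y)); rewrite -fD !subrK. Qed.

Section RingAutomorphism.
Variables (R : unitRingType) (s : R -> R).
Hypothesis s_aut : is_ring_automorphism s.

Lemma aut_zmod_morphism : zmod_morphism s.
Proof. by case: s_aut => sD _ _ _; apply: additive_zmod_morphism. Qed.

Lemma aut_monoid_morphism : monoid_morphism s.
Proof. by case: s_aut. Qed.

HB.instance Definition _ := GRing.isZmodMorphism.Build R R s aut_zmod_morphism.
HB.instance Definition _ := GRing.isMonoidMorphism.Build R R s aut_monoid_morphism.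

Lemma iter_zmod_morphism k : zmod_morphism (iter k s).
Proof. by elim: k => // k IHk x y /=; rewrite IHk rmorphB. Qed.

Lemma iter_monoid_morphism k : monoid_morphism (iter k s).
Proof.
elim: k => [|k [iter1 iterM]]; first by [].
by split=> [|x y] /=; rewrite ?iter1 ?iterM (rmorph1, rmorphM).
Qed.

HB.instance Definition _ k :=
  GRing.isZmodMorphism.Build R R (iter k s) (iter_zmod_morphism k).
HB.instance Definition _ k :=
  GRing.isMonoidMorphism.Build R R (iter k s) (iter_monoid_morphism k).

Section SigmaIdeal.
Variable N : R -> Prop.
Hypothesis N_left_ideal : is_left_ideal N.
Hypothesis N_s : forall x, N x -> N (s x).

Lemma sigma_ideal_iter k x : N x -> N (iter k s x).
Proof. by move=> Nx; elim: k => //= k; apply: N_s. Qed.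

(* The left ideals [s^-k(N)] increase with [k]; if they are constant from [m] on,
   then [s^-j(b) = s^m(s^-(m+j)(b))] lies in [N]. *)
Lemma sigma_ideal_iter_surj : left_noetherian R ->
  forall j b, N b -> exists2 a, N a & iter j s a = b.
Proof.
move=> noeth j b Nb; case: s_aut => _ _ _ [g _ gK].
have iter_gK k x : iter k s (iter k g x) = x.
  by elim: k x => // k IHk x; rewrite iterSr iterS gK IHk.
pose I k x := N (iter k s x).
have I_ideal k : is_left_ideal (I k).
  case: N_left_ideal => N0 ND NM; rewrite /I.
  by split=> [|x y Ix Iy|r x Ix]; rewrite ?rmorph0 ?rmorphD ?rmorphM //; [apply: ND | apply: NM].
have I_incr k : subsetR (I k) (I k.+1) by move=> x; rewrite /I iterS; apply: N_s.
have [m stable] := noeth I I_ideal I_incr.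
exists (iter j g b); last exact: iter_gK.
have : I (m + j) (iter (m + j) g b) by rewrite /I iter_gK.
by move=> /(stable _ (leq_addr _ _)); rewrite /I iterD iter_gK.
Qed.

End SigmaIdeal.

Section SkewDerivation.
Variable d : R -> R.
Hypothesis dD : forall x y, d (x + y) = d x + d y.
Hypothesis dM : forall a b, d (a * b) = d a * b + s a * d b.

HB.instance Definition _ := GRing.isZmodMorphism.Build R R d (additive_zmod_morphism dD).

Lemma skew_derivation1 : d 1 = 0.
Proof.
have d11 := dM 1 1; rewrite !mulr1 rmorph1 mul1r in d11.
by apply: (addrI (d 1)); rewrite addr0 -d11.
Qed.

Variable q : R.
Hypothesis d_s : forall x, d (s x) = q * s (d x).
Hypothesis s_q : s q = q.
Hypothesis d_q : d q = 0.
Hypothesis q_central : central q.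

Definition central_constant c := [/\ central c, s c = c & d c = 0].

Lemma central_constant0 : central_constant 0.
Proof. by split; rewrite ?raddf0 // => x; rewrite mul0r mulr0. Qed.

Lemma central_constant1 : central_constant 1.
Proof. by split; rewrite ?rmorph1 ?skew_derivation1 // => x; rewrite mul1r mulr1. Qed.

Lemma central_constantD a b :
  central_constant a -> central_constant b -> central_constant (a + b).
Proof.
move=> [ac sa da] [bc sb db]; split; rewrite ?raddfD /= ?sa ?sb ?da ?db ?addr0 //.
by move=> x; rewrite mulrDl mulrDr ac bc.
Qed.

Lemma central_constantM a b :
  central_constant a -> central_constant b -> central_constant (a * b).
Proof.
move=> [ac sa da] [bc sb db]; split.
- by move=> x; rewrite -mulrA bc mulrA ac mulrA.
- by rewrite rmorphM /= sa sb.
by rewrite dM da db mul0r mulr0 addr0.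
Qed.

Lemma central_constantX k : central_constant (q ^+ k).
Proof.
elim: k => [|k IHk]; first exact: central_constant1.
by rewrite exprS; apply: central_constantM => //; split.
Qed.

Lemma central_constant_sum (J : Type) (r : seq J) (P : pred J) (F : J -> R) :
  (forall j, P j -> central_constant (F j)) -> central_constant (\sum_(j <- r | P j) F j).
Proof. by apply: big_ind; [exact: central_constant0 | exact: central_constantD]. Qed.

Lemma central_constant_prod (J : Type) (r : seq J) (P : pred J) (F : J -> R) :
  (forall j, P j -> central_constant (F j)) -> central_constant (\prod_(j <- r | P j) F j).
Proof. by apply: big_ind; [exact: central_constant1 | exact: central_constantM]. Qed.

Lemma skew_derivation_constant_mul c z : central_constant c -> d (c * z) = c * d z.
Proof. by case=> _ sc dc; rewrite dM dc mul0r add0r sc. Qed.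

Lemma skew_derivation_iter_sigma j z : d (iter j s z) = q ^+ j * iter j s (d z).
Proof.
elim: j => [|j IHj]; first by rewrite mul1r.
by rewrite !iterS d_s IHj rmorphM rmorphXn /= s_q exprS mulrA.
Qed.

Fixpoint qbinom (k j : nat) : R :=
  if k is k'.+1 then q ^+ j * qbinom k' j + (if j is j'.+1 then qbinom k' j' else 0)
  else (j == 0%N)%:R.
Arguments qbinom : simpl never.

Lemma qbinom0 j : qbinom 0 j = (j == 0%N)%:R.
Proof. by []. Qed.

Lemma qbinomS k j :
  qbinom k.+1 j = q ^+ j * qbinom k j + (if j is j'.+1 then qbinom k j' else 0).
Proof. by []. Qed.

Lemma qbinom_constant k j : central_constant (qbinom k j).
Proof.
elim: k j => [|k IHk] j.
  by rewrite qbinom0; case: (j == 0%N); [exact: central_constant1 | exact: central_constant0].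
rewrite qbinomS; apply: central_constantD; first exact/central_constantM/IHk/central_constantX.
by case: j => [|j]; [exact: central_constant0 | exact: IHk].
Qed.

Lemma qbinom_small k j : (k < j)%N -> qbinom k j = 0.
Proof.
elim: k j => [|k IHk] j kj; first by move: kj; rewrite qbinom0 lt0n => /negbTE->.
rewrite qbinomS IHk ?(ltn_trans _ kj) // mulr0 add0r.
by case: j kj => [|j] kj; last rewrite IHk.
Qed.

Lemma qbinom_id k : qbinom k k = 1.
Proof.
elim: k => [|k IHk]; first by [].
by rewrite qbinomS IHk qbinom_small // mulr0 add0r.
Qed.

Lemma qbinom_pred k : qbinom k.+1 k = \sum_(j < k.+1) q ^+ j.
Proof.
elim: k => [|k IHk]; first by rewrite big_ord1 qbinomS qbinom_id mulr1 addr0.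
by rewrite qbinomS IHk qbinom_id mulr1 [RHS]big_ord_recr addrC.
Qed.

Lemma q_leibniz k x y :
  iter k d (x * y) = \sum_(j < k.+1) qbinom k j * (iter j s (iter (k - j) d x) * iter j d y).
Proof.
elim: k => [|k IHk]; first by rewrite big_ord1 mul1r.
rewrite iterS IHk raddf_sum /=.
under eq_bigr => j _.
  rewrite (skew_derivation_constant_mul _ (qbinom_constant _ _)) dM skew_derivation_iter_sigma.
  rewrite -!iterS -(subSn (ltn_ord j)) mulrDr.
  over.
under [RHS]eq_bigr => j _ do rewrite qbinomS mulrDl.
rewrite !big_split /= [X in _ = X + _]big_ord_recr [X in _ = _ + X]big_ord_recl /=.
rewrite qbinom_small // mul0r mulr0 mul0r addr0 add0r.
congr (_ + _); apply: eq_bigr => j _.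
by case: (central_constantX j) => qjC _ _; rewrite !mulrA qjC.
Qed.

Section DerivativesOfProducts.
Variable N : R -> Prop.
Hypothesis N_ideal : is_ideal N.
Hypothesis N_s : forall x, N x -> N (s x).

Fixpoint skew_dprod (l : seq R) : R :=
  if l is a :: w then iter (size w) s (d a) * skew_dprod w else 1.

Lemma iter_d_prod_lt l k :
  {in l, forall x, N x} -> (k < size l)%N -> N (iter k d (\prod_(x <- l) x)).
Proof.
elim: l k => [|a w IHw] k // /forall_cons[Na wN] k_le.
rewrite big_cons q_leibniz; apply: (ideal_sum N_ideal) => j _; apply: (idealMl N_ideal).
have [j_lt|j_ge] := ltnP j (size w).
  by apply: (idealMl N_ideal); apply: IHw.
have jk : nat_of_ord j = k.
  by apply/anti_leq/andP; split; [rewrite -ltnS | exact: leq_trans (k_le : (k <= size w)%N) j_ge].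
rewrite (_ : k - j = 0)%N; last by rewrite jk subnn.
apply: (idealMr N_ideal); exact: sigma_ideal_iter N_s _ _ Na.
Qed.

Lemma qfactS m : qfact q m.+1 = qfact q m * qbinom m.+1 m.
Proof. by rewrite /qfact big_ord_recr qbinom_pred. Qed.

Lemma qfact_constant m : central_constant (qfact q m).
Proof.
apply: central_constant_prod => i _.
by apply: central_constant_sum => j _; apply: central_constantX.
Qed.

Lemma iter_d_prod_qfact l : {in l, forall x, N x} ->
  N (iter (size l) d (\prod_(x <- l) x) - qfact q (size l) * skew_dprod l).
Proof.
elim: l => [|a w IHw].
  by move=> _; rewrite big_nil /qfact big_ord0 mul1r subrr; apply: ideal0 N_ideal.
move=> /forall_cons[Na wN]; rewrite big_cons q_leibniz [size _]/= 2!big_ord_recr /=.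
(* Modulo N only the term [j = size w] of the Leibniz sum survives. *)
rewrite subSnn subnn qfactS qbinom_id.
set A := \sum_(i < _) _; set C := 1 * _; set e := qbinom _ _.
set X := iter _ s (d a); set D := iter _ d _; set T := skew_dprod w; set Q := qfact q _.
have [Qc _ _] := qfact_constant (size w).
have -> : Q * e * (X * T) = e * (X * (Q * T)).
  by rewrite (Qc e) -mulrA [Q * (X * T)]mulrA (Qc X) -mulrA.
have -> : A + e * (X * D) + C - e * (X * (Q * T)) = A + C + e * (X * (D - Q * T)).
  by rewrite !mulrBr -!addrA; congr (_ + _); rewrite addrCA.
apply: (idealD N_ideal); last first.
  by apply: (idealMl N_ideal); apply: (idealMl N_ideal); apply: IHw.
apply: (idealD N_ideal).
  apply: (ideal_sum N_ideal) => i _; apply: (idealMl N_ideal); apply: (idealMl N_ideal).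
  exact: iter_d_prod_lt.
apply: (idealMl N_ideal); apply: (idealMr N_ideal); apply: N_s.
exact: sigma_ideal_iter N_s _ _ Na.
Qed.

Hypothesis noeth : left_noetherian R.

Lemma prod_d_skew_dprod bs : {in bs, forall x, N x} ->
  exists as_ c, [/\ {in as_, forall x, N x}, size as_ = size bs, central_constant c &
    \prod_(b <- bs) d b = c * skew_dprod as_].
Proof.
elim: bs => [|b bs IHbs].
  by move=> _; exists [::], 1; split; [|by []|exact: central_constant1|rewrite big_nil mul1r].
move=> /forall_cons[Nb bsN]; have [as_ [c [asN size_as c_const prod_bs]]] := IHbs bsN.
have [a Na <-] := sigma_ideal_iter_surj N_ideal.1 N_s noeth (size bs) Nb.
exists (a :: as_), (q ^+ size bs * c); split.
- exact/forall_cons.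
- by rewrite /= size_as.
- exact: central_constantM (central_constantX _) c_const.
case: c_const => cC _ _; rewrite big_cons prod_bs skew_derivation_iter_sigma /= size_as.
by rewrite -!mulrA; congr (_ * _); rewrite !mulrA cC.
Qed.

Variable n : nat.
Hypothesis N_nil : forall x, setpow N n x -> iter n d x = 0.
Hypothesis qfact_unit : qfact q n \is a GRing.unit.

Lemma skew_dprod_in l : {in l, forall x, N x} -> size l = n -> N (skew_dprod l).
Proof.
move=> lN size_l; have := iter_d_prod_qfact lN.
have -> : iter (size l) d (\prod_(x <- l) x) = 0.
  rewrite size_l; apply: N_nil; exists 1%N, (fun _ i => nth 0 l i); split.
    by move=> _ i; apply: lN; rewrite mem_nth // size_l.
  by rewrite big_ord1 (big_nth 0) size_l big_mkord.
rewrite sub0r size_l => /(idealN N_ideal); rewrite opprK => /(idealMl N_ideal (qfact q n)^-1).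
by rewrite mulKr.
Qed.

Lemma prod_d_in bs : {in bs, forall x, N x} -> size bs = n -> N (\prod_(b <- bs) d b).
Proof.
move=> bsN size_bs; have [as_ [c [asN size_as _ ->]]] := prod_d_skew_dprod bsN.
by apply: (idealMl N_ideal); apply: skew_dprod_in; rewrite // size_as.
Qed.

Lemma setpow_d_sub : subsetR (setpow (imageR d N) n) N.
Proof.
move=> _ [m [f [fdN ->]]]; apply: (ideal_sum N_ideal) => j _.
have [h hP] : exists h : 'I_n -> R, forall i, N (h i) /\ f j i = d (h i).
  apply: (fin_all_exists (U := fun=> R) (P := fun i u => N u /\ f j i = d u)) => i.
  by have [a [Na ->]] := fdN j i; exists a.
have -> : \prod_(i < n) f j i = \prod_(b <- map h (index_enum 'I_n)) d b.
  by rewrite big_map; apply: eq_bigr => i _; case: (hP i).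
apply: prod_d_in; last by rewrite size_map [index_enum _]unlock -enumT size_enum_ord.
by move=> _ /mapP[i _ ->]; case: (hP i).
Qed.

Definition ideal_dN x := exists2 a, N a & N (x - d a).

Lemma ideal_dN_ideal : is_ideal ideal_dN.
Proof.
case: s_aut => _ _ _ [g _ gK].
apply: is_ideal_intro => [|x y [a Na Nxa] [b Nb Nyb]|r x [a Na Nxa]|r x [a Na Nxa]].
- by exists 0; rewrite ?raddf0 ?subr0 ?addr0; apply: ideal0 N_ideal.
- exists (a + b); first exact: idealD.
  by rewrite raddfD /= opprD addrACA; apply: idealD.
- exists (g r * a); first exact: idealMl.
  rewrite dM gK (_ : r * x - _ = r * (x - d a) - d (g r) * a).
    by apply: (idealB N_ideal); apply: (idealMl N_ideal).
  by rewrite mulrBr opprD addrA addrAC.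
- exists (a * r); first exact: idealMr.
  rewrite dM opprD addrA -mulrBl.
  by apply: (idealB N_ideal); apply: (idealMr N_ideal) => //; apply: N_s.
Qed.

Lemma prod_ideal_dN l : {in l, forall x, ideal_dN x} ->
  exists2 bs, {in bs, forall x, N x} /\ size bs = size l &
    N (\prod_(x <- l) x - \prod_(b <- bs) d b).
Proof.
elim: l => [|x l IHl].
  by exists [::]; [|rewrite !big_nil subrr; exact: ideal0 N_ideal].
move=> /forall_cons[[a Na Nxa] lI]; have [bs [bsN size_bs] Nlbs] := IHl lI.
exists (a :: bs); first by split; [exact/forall_cons | rewrite /= size_bs].
set P := \prod_(y <- l) y; set Pd := \prod_(b <- bs) d b.
rewrite !big_cons (_ : x * P - d a * Pd = (x - d a) * P + d a * (P - Pd)).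
  by apply: (idealD N_ideal); [apply: (idealMr N_ideal) | apply: (idealMl N_ideal)].
by rewrite mulrBl mulrBr addrA subrK.
Qed.

Lemma prod_ideal_dN_in l :
  {in l, forall x, ideal_dN x} -> size l = n -> N (\prod_(x <- l) x).
Proof.
move=> lI size_l; have [bs [bsN size_bs] Nlbs] := prod_ideal_dN lI.
rewrite -(subrK (\prod_(b <- bs) d b) (\prod_(x <- l) x)).
by apply: (idealD N_ideal Nlbs); apply: prod_d_in; rewrite // size_bs.
Qed.

End DerivativesOfProducts.
End SkewDerivation.
End RingAutomorphism.

Theorem proposition3p1p2 (R : unitRingType) (q : R) (s d : R -> R)
  (N : R -> Prop) (n : nat) :
  noetherian R ->
  q \is a GRing.unit -> central q ->
  is_q_skew_derivation q s d ->
  is_sigma_ideal s N ->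
  (0 < n)%N ->
  (forall x, setpow N n x -> iter n d x = 0) ->
  qfact q n \is a GRing.unit ->
  subsetR (setpow (imageR d N) n) N /\
  ((forall x, N x <-> prime_radical x) -> subsetR (imageR d N) N).
Proof.
move=> [noeth _] _ q_central [[s_aut dD dM] d_s s_q d_q] [N_ideal N_s] n_gt0 N_nil qfact_unit.
split.
  exact: (setpow_d_sub s_aut dD dM d_s s_q d_q q_central N_ideal N_s noeth N_nil qfact_unit).
move=> N_rad _ [a [Na ->]]; apply/N_rad => P P_prime.
apply: (prime_ideal_pow (k := n.-1) P_prime (ideal_dN_ideal s_aut dD dM N_ideal N_s)).
  move=> l lI; rewrite prednK // => size_l; apply: (N_rad _).1 P P_prime.
  exact: (prod_ideal_dN_in s_aut dD dM d_s s_q d_q q_central N_ideal N_s noeth N_nil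
    qfact_unit lI size_l).
by exists a; rewrite // subrr; apply: ideal0 N_ideal.
Qed.
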